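(* Let $(\alpha_1,\alpha_2)\in\mathbb{C}^2$ and $p_1,p_2\in\mathbb{C}[u]\setminus\{0\}$. (i) $\mathcal{A}_{\alpha_1,\alpha_2}(p_1,p_2)\simeq\mathcal{A}_{\alpha_2,\alpha_1}(p_2,p_1)$. (ii) If $\psi(u)=\gamma u+\gamma_0$ with $\gamma\in\mathbb{C}\setminus\{0\}$ and $\gamma_0\in\mathbb{C}$, then $\mathcal{A}_{\alpha_1,\alpha_2}(p_1\circ\psi,p_2\circ\psi)\simeq\mathcal{A}_{\gamma\alpha_1,\gamma\alpha_2}(p_1,p_2)$.
   Context: $\tilde{\mathcal{A}}_{\alpha_1,\alpha_2}(p_1,p_2)$ is the $\mathbb{C}$-algebra generated by $H,X_1^\pm,X_2^\pm$ with relations ($i=1,2$) $HX_i^\pm-X_i^\pm H=\pm\alpha_iX_i^\pm$, $X_i^+X_i^-=p_i(H-\alpha_i/2)$, $X_i^-X_i^+=p_i(H+\alpha_i/2)$, $X_1^+X_2^-=X_2^-X_1^+$, $X_1^-X_2^+=X_2^+X_1^-$; the noncommutative Kleinian fiber product $\mathcal{A}_{\alpha_1,\alpha_2}(p_1,p_2)$ is its quotient by the ideal of all $a$ with $f(H)a=0$ for some nonzero polynomial $f$. *)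

From HB Require Import structures.
From mathcomp Require Import all_boot all_order all_algebra.
From mathcomp Require Import complex.
Set Implicit Arguments. Unset Strict Implicit. Unset Printing Implicit Defensive.
Import Order.TTheory GRing.Theory Num.Theory.
Local Open Scope ring_scope.

Section KFP.
Variable R : rcfType.
Local Notation C := (complex R).

(* The defining relations of  \tilde A_{a1,a2}(p1,p2)  on elements
   h, x1p = X_1^+, x1m = X_1^-, x2p = X_2^+, x2m = X_2^- of a C-algebra A. *)
Definition kfp_rels (a1 a2 : C) (p1 p2 : {poly C}) (A : algType C)
    (h x1p x1m x2p x2m : A) : Prop :=
  (h * x1p - x1p * h = a1 *: x1p) /\
  (h * x1m - x1m * h = - (a1 *: x1m)) /\
  (h * x2p - x2p * h = a2 *: x2p) /\
  (h * x2m - x2m * h = - (a2 *: x2m)) /\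
  (x1p * x1m = horner_alg (h - (a1 / 2%:R)%:A) p1) /\
  (x1m * x1p = horner_alg (h + (a1 / 2%:R)%:A) p1) /\
  (x2p * x2m = horner_alg (h - (a2 / 2%:R)%:A) p2) /\
  (x2m * x2p = horner_alg (h + (a2 / 2%:R)%:A) p2) /\
  (x1p * x2m = x2m * x1p) /\
  (x1m * x2p = x2p * x1m).

(* (At; h, x1p, x1m, x2p, x2m) is a presentation of \tilde A_{a1,a2}(p1,p2):
   the generators satisfy the relations and the universal property of the
   algebra given by generators and relations holds. *)
Definition kfp_tilde_presentation (a1 a2 : C) (p1 p2 : {poly C})
    (At : algType C) (h x1p x1m x2p x2m : At) : Prop :=
  kfp_rels a1 a2 p1 p2 h x1p x1m x2p x2m /\
  forall (B : algType C) (hb y1p y1m y2p y2m : B),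
    kfp_rels a1 a2 p1 p2 hb y1p y1m y2p y2m ->
    (exists f : {lrmorphism At -> B},
        [/\ f h = hb, f x1p = y1p, f x1m = y1m, f x2p = y2p & f x2m = y2m]) /\
    (forall f g : {lrmorphism At -> B},
        [/\ f h = hb, f x1p = y1p, f x1m = y1m, f x2p = y2p & f x2m = y2m] ->
        [/\ g h = hb, g x1p = y1p, g x1m = y1m, g x2p = y2p & g x2m = y2m] ->
        f =1 g).

(* A is (a model of) the noncommutative Kleinian fiber product
   A_{a1,a2}(p1,p2): the quotient of \tilde A_{a1,a2}(p1,p2) by the ideal
   of all a such that f(H) a = 0 for some nonzero polynomial f, i.e. the
   codomain of a surjective algebra morphism from \tilde A whose kernel is
   exactly that ideal. *)
Definition is_kleinian_fiber_product (a1 a2 : C) (p1 p2 : {poly C})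
    (A : algType C) : Prop :=
  exists (At : algType C) (h x1p x1m x2p x2m : At),
    kfp_tilde_presentation a1 a2 p1 p2 h x1p x1m x2p x2m /\
    exists pi : {lrmorphism At -> A},
      (forall b : A, exists a : At, pi a = b) /\
      (forall a : At, pi a = 0 <->
         exists f : {poly C}, f != 0 /\ horner_alg h f * a = 0).

Definition alg_isomorphic (A B : algType C) : Prop :=
  exists f : {lrmorphism A -> B}, bijective f.

End KFP.

From HB Require Import structures.
From mathcomp Require Import all_boot all_order all_algebra.
From mathcomp Require Import complex.
From mathcomp Require Import reals.
Import Order.TTheory GRing.Theory Num.Theory.
Local Open Scope ring_scope.
Set Implicit Arguments. Unset Strict Implicit. Unset Printing Implicit Defensive.

(* Both isomorphisms already exist between the algebras given by generators
   and relations: (i) exchanges the indices 1 and 2, and (ii) sends H to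
   psi(H) and fixes the X_i^+, X_i^-. The relations are preserved in (ii)
   because psi is affine: [psi(H), X] = gamma [H, X] and
   p(psi(H) -+ gamma alpha / 2) = (p o psi)(H -+ alpha / 2). Such an
   isomorphism maps H to a nonconstant polynomial g(H'), and f(H) a = 0 with
   f <> 0 becomes (f o g)(H') a' = 0 with f o g <> 0, so it maps the
   H-torsion ideal onto the H'-torsion ideal and descends to the quotients. *)

Section HornerAlg.
Variable K : fieldType.

Lemma lrmorph_horner_alg (A B : algType K) (f : {lrmorphism A -> B}) (x : A) p :
  f (horner_alg x p) = horner_alg (f x) p.
Proof.
elim/poly_ind: p => [|p c IHp]; first by rewrite !rmorph0.
by rewrite !rmorphD !rmorphM /= IHp !horner_algX !horner_algC linearZ /= rmorph1.
Qed.

Lemma horner_alg_comp (A : algType K) (x : A) p q :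
  horner_alg x (p \Po q) = horner_alg (horner_alg x q) p.
Proof.
elim/poly_ind: p => [|p c IHp]; first by rewrite comp_poly0 !rmorph0.
rewrite comp_polyD comp_polyM comp_polyX comp_polyC !rmorphD !rmorphM /= IHp.
by rewrite !horner_algC horner_algX.
Qed.

Lemma horner_alg_affine (A : algType K) (x : A) c d :
  horner_alg x (c *: 'X + d%:P) = c *: x + d%:A.
Proof.
by rewrite -mul_polyC rmorphD rmorphM /= !horner_algC horner_algX mulr_algl.
Qed.

Lemma size_affine_poly (c d : K) : c != 0 -> size (c *: 'X + d%:P) = 2.
Proof.
move=> c_neq0; rewrite -mul_polyC size_MXaddC polyC_eq0 (negbTE c_neq0) /=.
by rewrite size_polyC c_neq0.
Qed.

Lemma comp_affine_poly (c d c' d' : K) :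
  (c *: 'X + d%:P) \Po (c' *: 'X + d'%:P) = (c * c') *: 'X + (c * d' + d)%:P.
Proof.
rewrite comp_polyD comp_polyC comp_polyZ comp_polyX scalerDr scalerA.
by rewrite scale_polyC polyCD addrA.
Qed.

Lemma comp_affine_polyV (c d : K) : c != 0 ->
  (c^-1 *: 'X + (- (c^-1 * d))%:P) \Po (c *: 'X + d%:P) = 'X /\
  (c *: 'X + d%:P) \Po (c^-1 *: 'X + (- (c^-1 * d))%:P) = 'X.
Proof.
move=> c_neq0; rewrite !comp_affine_poly mulVf // mulfV // mulrN mulrA mulfV //.
by rewrite mul1r addrN addNr scale1r addr0.
Qed.

Definition poly_torsion (A : algType K) (h a : A) : Prop :=
  exists f : {poly K}, f != 0 /\ horner_alg h f * a = 0.

Lemma lrmorph_poly_torsion (A B : algType K) (f : {lrmorphism A -> B})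
    (h a : A) (h' : B) (s : {poly K}) :
  (1 < size s)%N -> f h = horner_alg h' s ->
  poly_torsion h a -> poly_torsion h' (f a).
Proof.
move=> s_gt1 fh [g [g_neq0 gha]]; exists (g \Po s); split.
  by rewrite comp_poly_eq0.
by rewrite horner_alg_comp -fh -lrmorph_horner_alg -rmorphM gha rmorph0.
Qed.

End HornerAlg.

Section InducedMorphism.
Variables (K : fieldType) (At A B : algType K).
Variables (pi : {lrmorphism At -> A}) (phi : {lrmorphism At -> B}).
Hypothesis pi_surj : forall b, exists a, pi a = b.
Hypothesis ker_pi_phi : forall a, pi a = 0 -> phi a = 0.

Let pi_surjb (b : A) : exists a, pi a == b.
Proof. by have [a <-] := pi_surj b; exists a. Qed.

Definition induced_map (b : A) : B := phi (xchoose (pi_surjb b)).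

Lemma induced_mapE a : induced_map (pi a) = phi a.
Proof.
apply/eqP; rewrite -subr_eq0 -rmorphB; apply/eqP/ker_pi_phi.
by rewrite rmorphB /= (eqP (xchooseP (pi_surjb (pi a)))) subrr.
Qed.

Lemma induced_map_zmod : GRing.zmod_morphism induced_map.
Proof.
move=> x y; have [a <-] := pi_surj x; have [b <-] := pi_surj y.
by rewrite -rmorphB !induced_mapE rmorphB.
Qed.

Lemma induced_map_monoid : GRing.monoid_morphism induced_map.
Proof.
split; first by rewrite -(rmorph1 pi) induced_mapE rmorph1.
move=> x y; have [a <-] := pi_surj x; have [b <-] := pi_surj y.
by rewrite -rmorphM !induced_mapE rmorphM.
Qed.

Lemma induced_map_scalable : scalable induced_map.
Proof.
move=> c x; have [a <-] := pi_surj x.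
by rewrite -linearZ !induced_mapE linearZ.
Qed.

HB.instance Definition _ :=
  GRing.isZmodMorphism.Build A B induced_map induced_map_zmod.
HB.instance Definition _ :=
  GRing.isMonoidMorphism.Build A B induced_map induced_map_monoid.
HB.instance Definition _ :=
  GRing.isScalable.Build K A B *:%R induced_map induced_map_scalable.

Lemma induced_lrmorphism :
  exists f : {lrmorphism A -> B}, forall a, f (pi a) = phi a.
Proof. by exists induced_map; exact: induced_mapE. Qed.

End InducedMorphism.

Section KleinianFiberProduct.
Variable R : rcfType.
Local Notation C := (complex R).

Lemma alg_isomorphic_quotients (At Bt A B : algType C)
    (phi : {lrmorphism At -> Bt}) (psi : {lrmorphism Bt -> At})
    (piA : {lrmorphism At -> A}) (piB : {lrmorphism Bt -> B}) :
  cancel phi psi -> cancel psi phi ->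
  (forall b, exists a, piA a = b) -> (forall b, exists a, piB a = b) ->
  (forall a, piA a = 0 <-> piB (phi a) = 0) ->
  alg_isomorphic A B.
Proof.
move=> phiK psiK piA_surj piB_surj ker_eq.
have ker_phi a : piA a = 0 -> piB (phi a) = 0 by move/ker_eq.
have [f fE] := induced_lrmorphism (phi := piB \o phi) piA_surj ker_phi.
have ker_psi b : piB b = 0 -> piA (psi b) = 0.
  by move=> ?; apply/ker_eq; rewrite psiK.
have [g gE] := induced_lrmorphism (phi := piA \o psi) piB_surj ker_psi.
exists f; exists g => [x | y].
- by have [a <-] := piA_surj x; rewrite fE gE /= phiK.
- by have [b <-] := piB_surj y; rewrite gE fE /= psiK.
Qed.

Lemma kfp_rels_swap a1 a2 p1 p2 (X : algType C) (h x1p x1m x2p x2m : X) :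
  kfp_rels a1 a2 p1 p2 h x1p x1m x2p x2m ->
  kfp_rels a2 a1 p2 p1 h x2p x2m x1p x1m.
Proof. by move=> [? [? [? [? [? [? [? [? [? ?]]]]]]]]]; do 9! split=> //. Qed.

Lemma kfp_rels_affine c d a1 a2 p1 p2 (X : algType C) (h x1p x1m x2p x2m : X) :
  let psi := c *: 'X + d%:P in
  kfp_rels a1 a2 (p1 \Po psi) (p2 \Po psi) h x1p x1m x2p x2m ->
  kfp_rels (c * a1) (c * a2) p1 p2 (horner_alg h psi) x1p x1m x2p x2m.
Proof.
move=> psi [e1 [e2 [e3 [e4 [e5 [e6 [e7 [e8 [? ?]]]]]]]]].
rewrite !horner_alg_comp in e5 e6 e7 e8.
set Y := horner_alg h psi.
have commY x : Y * x - x * Y = c *: (h * x - x * h).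
  rewrite /Y horner_alg_affine mulrDl mulrDr -scalerAl -scalerAr.
  by rewrite mulr_algl mulr_algr scalerBr opprD addrA addrAC addrK.
have psi_sub k : horner_alg (h - k%:A) psi = Y - (c * k)%:A.
  by rewrite /Y !horner_alg_affine scalerBr scalerA addrAC.
have psi_add k : horner_alg (h + k%:A) psi = Y + (c * k)%:A.
  by rewrite /Y !horner_alg_affine scalerDr scalerA addrAC.
rewrite /kfp_rels !commY e1 e2 e3 e4 e5 e6 e7 e8 !psi_sub !psi_add.
by rewrite !scalerN !scalerA !mulrA; do 9! split.
Qed.

Lemma kfp_presentation_endo_id a1 a2 p1 p2 (At : algType C)
    (h x1p x1m x2p x2m : At) (f : {lrmorphism At -> At}) :
  kfp_tilde_presentation a1 a2 p1 p2 h x1p x1m x2p x2m ->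
  f h = h -> f x1p = x1p -> f x1m = x1m -> f x2p = x2p -> f x2m = x2m ->
  f =1 id.
Proof.
move=> [rels univ] *; apply: ((univ _ _ _ _ _ _ rels).2 _ idfun); by split.
Qed.

Lemma alg_isomorphic_kfp a1 a2 p1 p2 b1 b2 q1 q2 (s s' : {poly C})
    (A B : algType C) :
  (1 < size s)%N -> (1 < size s')%N ->
  (forall (At Bt : algType C) (hA x1p x1m x2p x2m : At)
          (hB y1p y1m y2p y2m : Bt),
     kfp_tilde_presentation a1 a2 p1 p2 hA x1p x1m x2p x2m ->
     kfp_tilde_presentation b1 b2 q1 q2 hB y1p y1m y2p y2m ->
     exists (phi : {lrmorphism At -> Bt}) (psi : {lrmorphism Bt -> At}),
       [/\ cancel phi psi, cancel psi phi,
           phi hA = horner_alg hB s & psi hB = horner_alg hA s']) ->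
  is_kleinian_fiber_product a1 a2 p1 p2 A ->
  is_kleinian_fiber_product b1 b2 q1 q2 B ->
  alg_isomorphic A B.
Proof.
move=> s_gt1 s'_gt1 tilde_iso.
move=> [At [hA [x1p [x1m [x2p [x2m [presA [piA [piA_surj kerA]]]]]]]]].
move=> [Bt [hB [y1p [y1m [y2p [y2m [presB [piB [piB_surj kerB]]]]]]]]].
have [phi [psi [phiK psiK phi_h psi_h]]] :=
  tilde_iso _ _ _ _ _ _ _ _ _ _ _ _ presA presB.
apply: (alg_isomorphic_quotients phiK psiK piA_surj piB_surj) => a.
rewrite kerA kerB; split; first exact: lrmorph_poly_torsion s_gt1 phi_h.
by rewrite -{2}[a]phiK; apply: lrmorph_poly_torsion s'_gt1 psi_h.
Qed.

Lemma kfp_tilde_swap a1 a2 p1 p2 (At Bt : algType C)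
    (hA x1p x1m x2p x2m : At) (hB y1p y1m y2p y2m : Bt) :
  kfp_tilde_presentation a1 a2 p1 p2 hA x1p x1m x2p x2m ->
  kfp_tilde_presentation a2 a1 p2 p1 hB y1p y1m y2p y2m ->
  exists (phi : {lrmorphism At -> Bt}) (psi : {lrmorphism Bt -> At}),
    [/\ cancel phi psi, cancel psi phi, phi hA = hB & psi hB = hA].
Proof.
move=> presA presB; have [relA univA] := presA; have [relB univB] := presB.
have [[phi [phi_h phi1p phi1m phi2p phi2m]] _] :=
  univA _ _ _ _ _ _ (kfp_rels_swap relB).
have [[psi [psi_h psi1p psi1m psi2p psi2m]] _] :=
  univB _ _ _ _ _ _ (kfp_rels_swap relA).
exists phi, psi; split=> //.
- by apply: (kfp_presentation_endo_id (f := psi \o phi) presA) => /=;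
     rewrite ?phi_h ?phi1p ?phi1m ?phi2p ?phi2m.
- by apply: (kfp_presentation_endo_id (f := phi \o psi) presB) => /=;
     rewrite ?psi_h ?psi1p ?psi1m ?psi2p ?psi2m.
Qed.

Lemma kfp_tilde_affine c d a1 a2 p1 p2 (At Bt : algType C)
    (hA x1p x1m x2p x2m : At) (hB y1p y1m y2p y2m : Bt) :
  c != 0 ->
  let psi := c *: 'X + d%:P in
  let psiV := c^-1 *: 'X + (- (c^-1 * d))%:P in
  kfp_tilde_presentation a1 a2 (p1 \Po psi) (p2 \Po psi) hA x1p x1m x2p x2m ->
  kfp_tilde_presentation (c * a1) (c * a2) p1 p2 hB y1p y1m y2p y2m ->
  exists (f : {lrmorphism At -> Bt}) (g : {lrmorphism Bt -> At}),
    [/\ cancel f g, cancel g f,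
        f hA = horner_alg hB psiV & g hB = horner_alg hA psi].
Proof.
move=> c_neq0 psi psiV presA presB.
have [relA univA] := presA; have [relB univB] := presB.
have [psiVK psiK] : psiV \Po psi = 'X /\ psi \Po psiV = 'X.
  exact: comp_affine_polyV.
have relB' : kfp_rels a1 a2 (p1 \Po psi) (p2 \Po psi)
               (horner_alg hB psiV) y1p y1m y2p y2m.
  have := @kfp_rels_affine c^-1 (- (c^-1 * d)) (c * a1) (c * a2)
            (p1 \Po psi) (p2 \Po psi) _ hB y1p y1m y2p y2m.
  rewrite /= -/psiV -!comp_polyA psiK !comp_polyXr.
  by rewrite !mulrA !mulVf // !mul1r; apply.
have [[f [f_h f1p f1m f2p f2m]] _] := univA _ _ _ _ _ _ relB'.
have [[g [g_h g1p g1m g2p g2m]] _] := univB _ _ _ _ _ _ (kfp_rels_affine relA).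
exists f, g; split=> //.
- apply: (kfp_presentation_endo_id (f := g \o f) presA) => /=;
    rewrite ?f1p ?f1m ?f2p ?f2m //.
  by rewrite f_h lrmorph_horner_alg g_h -horner_alg_comp psiVK horner_algX.
- apply: (kfp_presentation_endo_id (f := f \o g) presB) => /=;
    rewrite ?g1p ?g1m ?g2p ?g2m //.
  by rewrite g_h lrmorph_horner_alg f_h -horner_alg_comp psiK horner_algX.
Qed.

End KleinianFiberProduct.

Theorem mainTheorem14 (R : realType) (a1 a2 : R[i]) (p1 p2 : {poly R[i]}) :
  p1 != 0 -> p2 != 0 ->
  (forall A B : algType R[i],
     is_kleinian_fiber_product a1 a2 p1 p2 A ->
     is_kleinian_fiber_product a2 a1 p2 p1 B ->
     alg_isomorphic A B) /\
  (forall (gamma gamma0 : R[i]), gamma != 0 ->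
   let psi := gamma *: 'X + gamma0%:P in
   forall A B : algType R[i],
     is_kleinian_fiber_product a1 a2 (p1 \Po psi) (p2 \Po psi) A ->
     is_kleinian_fiber_product (gamma * a1) (gamma * a2) p1 p2 B ->
     alg_isomorphic A B).
Proof.
(* The isomorphisms exist for arbitrary p1, p2. *)
move=> _ _; split=> [A B | c d c_neq0 psi A B].
- apply: (alg_isomorphic_kfp (s := 'X) (s' := 'X)); rewrite ?size_polyX //.
  move=> At Bt hA x1p x1m x2p x2m hB y1p y1m y2p y2m presA presB.
  have [phi [phi' [phiK phi'K phi_h phi'_h]]] := kfp_tilde_swap presA presB.
  by exists phi, phi'; rewrite !horner_algX.
- apply: (alg_isomorphic_kfp (s := c^-1 *: 'X + (- (c^-1 * d))%:P) (s' := psi)).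
  + by rewrite size_affine_poly // invr_eq0.
  + by rewrite /psi size_affine_poly.
  + move=> At Bt hA x1p x1m x2p x2m hB y1p y1m y2p y2m presA presB.
    exact: kfp_tilde_affine c_neq0 presA presB.
Qed.
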